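(* Let $K$ be a simplicial complex, $X\cup Y=K_0$ a cover of its vertex set, $A:=X\cap Y$, $P:=\{\sigma\in K\mid\sigma\subset X\text{ or }\sigma\subset Y\text{ or }\sigma\cap A\neq\emptyset\}$, and $g\colon P\hookrightarrow K$ the poset inclusion. For a simplex $\sigma$ of $K$, let $\sigma\!\uparrow\! g$ be the poset of simplices $\tau\in P$ with $\sigma\subset\tau$ (ordered by inclusion), let $\psi_\sigma\colon\mathrm{St}(\sigma,A)\to\sigma\!\uparrow\! g$ be $\mu\mapsto\mu\cup\sigma$, and let $\phi_\sigma\colon\sigma\!\uparrow\! g\to\mathrm{St}(\sigma)$ be $\tau\mapsto\tau$. Then: (1) if $\sigma\in P$, then $\sigma\!\uparrow\! g$ is contractible and $\phi_\sigma$ is a weak equivalence; (2) if $\sigma\in K\setminus P$, then $\psi_\sigma$ is a weak equivalence.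
   Context: A simplicial complex is a collection of finite nonempty subsets of a fixed set closed under taking nonempty subsets; $K_0$ is its vertex set and its simplices form a poset under inclusion. $\mathrm{St}(\sigma):=\{\mu\in K\mid\sigma\cup\mu\in K\}$ and $\mathrm{St}(\sigma,A):=\{\mu\subset A\mid 0<|\mu|<\infty,\ \mu\cup\sigma\in K\}$, both regarded as posets under inclusion. Homotopical notions for posets/functors refer to their nerves. *)

From HB Require Import structures.
From mathcomp Require Import all_boot all_order all_algebra.
From mathcomp Require Import finmap.
From mathcomp Require Import boolp classical_sets.
From mathcomp Require Import Rstruct.
Set Implicit Arguments. Unset Strict Implicit. Unset Printing Implicit Defensive.
Import Order.TTheory GRing.Theory Num.Theory.
Local Open Scope ring_scope.
Local Open Scope fset_scope.

Notation R := Rdefinitions.R.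

Section Complexes.
Variable V : choiceType.

Definition simplicial_complex (K : {fset V} -> Prop) : Prop :=
  (forall s, K s -> s != fset0) /\
  (forall s t, K s -> t `<=` s -> t != fset0 -> K t).

Definition vertices (K : {fset V} -> Prop) (v : V) : Prop := K [fset v].

Definition Star (K : {fset V} -> Prop) (sigma : {fset V}) (mu : {fset V}) : Prop :=
  K mu /\ K (sigma `|` mu).

Definition StarIn (K : {fset V} -> Prop) (sigma : {fset V}) (A : V -> Prop)
  (mu : {fset V}) : Prop :=
  (forall v, v \in mu -> A v) /\ mu != fset0 /\ K (mu `|` sigma).

Definition up_inclusion (P : {fset V} -> Prop) (sigma : {fset V}) (tau : {fset V}) : Prop :=
  P tau /\ sigma `<=` tau.

End Complexes.

Section Spaces.

Record space := Space {
  carrier : Type;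
  pts : carrier -> Prop;
  opn : (carrier -> Prop) -> Prop }.

(* f : X -> Y continuous: maps points to points and pulls back open sets
   to open sets (traces on the point sets) *)
Definition cont (X Y : space) (f : carrier X -> carrier Y) : Prop :=
  (forall x, pts x -> pts (f x)) /\
  (forall U, opn U -> exists2 W, opn W & forall x, pts x -> (W x <-> U (f x))).

Definition unit_interval (t : R) : Prop := 0 <= t <= 1.

Definition cube (n : nat) : space :=
  @Space ('I_n -> R) (fun t => forall i, unit_interval (t i))
    (fun W => forall t, (forall i, unit_interval (t i)) -> W t ->
       exists2 e : R, 0 < e & forall t', (forall i, unit_interval (t' i)) ->
          (forall i, `|t i - t' i| < e) -> W t').

Definition cube_boundary (n : nat) (t : 'I_n -> R) : Prop :=
  exists i, t i = 0 \/ t i = 1.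

Definition prodI (X : space) : space :=
  @Space (carrier X * R)%type (fun z => pts z.1 /\ unit_interval z.2)
    (fun W => forall x t, pts x -> unit_interval t -> W (x, t) ->
       exists U, [/\ opn U, U x &
         exists2 e : R, 0 < e & forall x' t', pts x' -> U x' -> unit_interval t' ->
            `|t - t'| < e -> W (x', t')]).

Definition homotopic_rel_boundary (X : space) (n : nat)
  (h1 h2 : ('I_n -> R) -> carrier X) : Prop :=
  exists H : ('I_n -> R) * R -> carrier X,
    [/\ @cont (prodI (cube n)) X H,
        forall t, (forall i, unit_interval (t i)) -> H (t, 0) = h1 t,
        forall t, (forall i, unit_interval (t i)) -> H (t, 1) = h2 t &
        forall t s, (forall i, unit_interval (t i)) -> cube_boundary t ->
          unit_interval s -> H (t, s) = h1 t].

Arguments homotopic_rel_boundary {X n} h1 h2.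

(* representatives of elements of pi_n(X, x): maps (I^n, dI^n) -> (X, x).
   For n = 0, I^0 is a point and dI^0 is empty, giving pi_0. *)
Definition based_map (X : space) (n : nat) (x : carrier X)
  (h : ('I_n -> R) -> carrier X) : Prop :=
  @cont (cube n) X h /\
  (forall t, (forall i, unit_interval (t i)) -> cube_boundary t -> h t = x).

Arguments based_map {X} n x h.

(* f is a weak homotopy equivalence: continuous and, for every n >= 0 and
   every base point x, pi_n(f) : pi_n(X, x) -> pi_n(Y, f x) is bijective. *)
Definition weak_equivalence (X Y : space) (f : carrier X -> carrier Y) : Prop :=
  cont f /\
  forall (n : nat) (x : carrier X), pts x ->
    (forall g, based_map n (f x) g ->
       exists2 h, based_map n x h & homotopic_rel_boundary (f \o h) g) /\
    (forall h1 h2, based_map n x h1 -> based_map n x h2 ->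
       homotopic_rel_boundary (f \o h1) (f \o h2) ->
       homotopic_rel_boundary h1 h2).

Definition contractible (X : space) : Prop :=
  exists2 x0, pts x0 &
    exists H : carrier X * R -> carrier X,
      [/\ @cont (prodI X) X H,
          forall x, pts x -> H (x, 0) = x &
          forall x, pts x -> H (x, 1) = x0].

End Spaces.

Section Nerve.
Variable V : choiceType.

(* a poset of finite subsets of V, ordered by inclusion, given by its members *)
Definition fposet := {fset V} -> Prop.

(* finite chains of the poset S (simplices of the nerve), as duplicate-free lists *)
Definition is_chain (S : fposet) (c : seq {fset V}) : Prop :=
  [/\ uniq c, forall x, x \in c -> S x &
      forall x y, x \in c -> y \in c -> (x `<=` y) || (y `<=` x)].

Definition supp_in (c : seq {fset V}) (p : {fset V} -> R) : Prop :=
  forall x, x \notin c -> p x = 0.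

(* points of the geometric realization |N(S)|: barycentric coordinates
   supported on a chain *)
Definition real_pt (S : fposet) (p : {fset V} -> R) : Prop :=
  exists c, [/\ is_chain S c, supp_in c p, (forall x, 0 <= p x) &
                \sum_(x <- c) p x = 1].

(* the weak (coherent) topology: U is open iff its trace on every closed
   simplex (chain c) is open in that simplex's Euclidean topology *)
Definition real_open (S : fposet) (U : ({fset V} -> R) -> Prop) : Prop :=
  forall c p, is_chain S c -> real_pt S p -> supp_in c p -> U p ->
    exists2 e : R, 0 < e & forall q, real_pt S q -> supp_in c q ->
      (forall x, x \in c -> `|p x - q x| < e) -> U q.

Definition realization (S : fposet) : space :=
  @Space ({fset V} -> R) (real_pt S) (real_open S).

Definition support_list (p : {fset V} -> R) : seq {fset V} :=
  xget [::] (fun c => uniq c /\ supp_in c p).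

(* the map |N(f)| induced by a poset map f on realizations (pushforward of
   barycentric coordinates) *)
Definition realize_map (f : {fset V} -> {fset V}) (p : {fset V} -> R) : {fset V} -> R :=
  fun y => \sum_(x <- support_list p | f x == y) p x.

Definition poset_contractible (S : fposet) : Prop := contractible (realization S).

Definition poset_weak_equivalence (S T : fposet) (f : {fset V} -> {fset V}) : Prop :=
  (forall x, S x -> T (f x)) /\
   (forall x y, S x -> S y -> x `<=` y -> f x `<=` f y) /\
   @weak_equivalence (realization S) (realization T) (realize_map f).

End Nerve.

(* An explicit Quillen homotopy lemma drives everything: for poset maps with
   f x <= g x pointwise, a prism formula in barycentric coordinates is a homotopy
   from |f| to |g|, continuous for the weak topology.  So a poset map f with a
   monotone left inverse r is a weak equivalence once f (r y) <= h y >= y for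
   some h fixing the image of f: the two prisms deform |T| onto the image of |f|,
   keeping that image fixed.
   For sigma not in P, every tau >= sigma in P meets A, and r tau := tau cap A is
   such a left inverse of psi_sigma, with h = id.
   For sigma in P, sigma is the least element of sigma|g, so that poset is
   contractible; r tau := tau cup sigma, cut down to whichever of X, Y contains
   sigma when it is not in P, is a left inverse of phi_sigma, with
   h tau = tau cup sigma. *)
From Pilot Require Import Defs.
From HB Require Import structures.
From mathcomp Require Import all_boot all_order all_algebra finmap.
From mathcomp Require Import boolp classical_sets reals Rstruct.
From mathcomp.algebra_tactics Require Import ring lra.
Set Implicit Arguments. Unset Strict Implicit. Unset Printing Implicit Defensive.
Import Order.TTheory GRing.Theory Num.Theory.
Local Open Scope fset_scope.
Local Open Scope ring_scope.

(* Compactness of [a, b]: the supremum of the t up to which one radius works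
   for all of [a, t] must be b. *)
Lemma interval_uniform_radius (Q : Type) (Good : Q -> R -> Prop) (Near : R -> Q -> Prop)
    (a b : R) :
  (forall d d' q, d' <= d -> Near d' q -> Near d q) -> a <= b ->
  (forall t, a <= t <= b -> exists2 d, 0 < d & forall q t', Near d q ->
       `|t - t'| < d -> a <= t' <= b -> Good q t') ->
  exists2 d, 0 < d & forall q, Near d q -> forall t, a <= t <= b -> Good q t.
Proof.
move=> Nmono ab Hloc.
pose E := [set t : R | a <= t <= b /\ exists2 d, 0 < d &
   forall q, Near d q -> forall t', a <= t' <= t -> Good q t']%classic.
have Ea : E a.
  split; first by rewrite lexx ab.
  have [|d d0 Hd] := Hloc a; first by rewrite lexx ab.
  exists d => // q Nq t' /andP[h1 h2].
  have -> : t' = a by apply/eqP; rewrite eq_le h1 h2.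
  by apply: Hd => //; [rewrite subrr normr0 | rewrite lexx ab].
have hsE : has_sup E by split; [exists a | exists b => t [/andP[_ ?] _]].
set M := sup E.
have aM : a <= M by exact: (sup_upper_bound hsE) Ea.
have Mb : M <= b by apply: ge_sup => //; [exists a | move=> t [/andP[_ ?] _]].
have [|dM dM0 HM] := Hloc M; first by rewrite aM Mb.
have [t Et Mt] := sup_adherent dM0 hsE.
rewrite -/M in Mt; case: Et => /andP[hat tb] [dt dt0 Ht].
pose t2 := Num.min b (M + dM / 2).
have Et2 : E t2.
  split; first by rewrite ge_min lexx le_min ab /=; lra.
  exists (Num.min dt dM); first by rewrite lt_min dt0 dM0.
  move=> q Nq t' /andP[hat' t't2].
  have [t't|tt'] := leP t' t.
    by apply: Ht; [apply: Nmono Nq; rewrite ge_min lexx | rewrite hat' t't].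
  move: t't2; rewrite le_min => /andP[h1 h2].
  apply: HM; first by apply: Nmono Nq; rewrite ge_min lexx orbT.
    by rewrite ltr_norml; apply/andP; split; lra.
  by rewrite hat' h1.
have t2b : t2 = b.
  have := sup_upper_bound hsE Et2; rewrite -/M /t2 ge_min => /orP[h|h]; last by lra.
  by apply/eqP; rewrite eq_le ge_min lexx /= le_min lexx /=; lra.
case: Et2 => _ [d d0 Hd]; exists d => // q Nq t' /andP[h1 h2].
by apply: (Hd q Nq); rewrite t2b h1 h2.
Qed.

Section Continuity.
Implicit Types X Y Z : Defs.space.

Lemma cont_comp X Y Z (f : carrier X -> carrier Y) (g : carrier Y -> carrier Z) :
  cont f -> cont g -> cont (g \o f).
Proof.
move=> [fp fo] [gp go]; split=> [x px|U oU]; first by apply: gp; apply: fp.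
have [W1 oW1 H1] := go U oU; have [W2 oW2 H2] := fo W1 oW1.
by exists W2 => // x px; rewrite H2 // H1 //; exact: fp.
Qed.

Lemma cont_eq X Y (f g : carrier X -> carrier Y) :
  (forall x, pts x -> f x = g x) -> cont f -> cont g.
Proof.
move=> e [fp fo]; split=> [x px|U oU]; first by rewrite -e //; apply: fp.
by have [W oW H] := fo U oU; exists W => // x px; rewrite -e //; exact: H.
Qed.

Lemma cont_prodI X Y (g : carrier X -> carrier Y) :
  cont g -> @cont (prodI X) (prodI Y) (fun z => (g z.1, z.2)).
Proof.
move=> [gp go]; split=> [[x t] /= [px ut]|W oW]; first by split=> //; apply: gp.
exists (fun z => W (g z.1, z.2)) => // x t px ut /= Wgx.
have [U0 [oU0 U0x [e e0 He]]] := oW (g x) t (gp _ px) ut Wgx.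
have [U oU HU] := go U0 oU0.
exists U; split => //; first by rewrite HU.
by exists e => // x' t' px' Ux' ut' lt; apply: He => //; [exact: gp | rewrite -HU].
Qed.

Lemma cont_prodI_rev X : @cont (prodI X) (prodI X) (fun z => (z.1, 1 - z.2)).
Proof.
split=> [[x t] /= [px /andP[t0 t1]]|W oW]; first by split=> //; apply/andP; split; lra.
exists (fun z => W (z.1, 1 - z.2)) => // x t px /andP[t0 t1] /= Wx.
have [|U [oU Ux [e e0 He]]] := oW x (1 - t) px _ Wx; first by apply/andP; split; lra.
exists U; split => //; exists e => // x' t' px' Ux' /andP[t0' t1'] lt.
apply: He => //; first by apply/andP; split; lra.
have -> : 1 - t - (1 - t') = t' - t by ring.
by rewrite distrC.
Qed.

Lemma cont_slice (V : choiceType) (S : fposet V) (s : R) :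
  unit_interval s -> @cont (realization S) (prodI (realization S)) (fun p => (p, s)).
Proof.
move=> us; split=> [p pp|W oW]; first by split.
exists (fun p => W (p, s)) => // ch p chp pp sp Wp.
have [U [oU Up [e e0 He]]] := oW p s pp us Wp.
have [d d0 Hd] := oU ch p chp pp sp Up.
exists d => // q pq sq nq; apply: He => //; first exact: Hd.
by rewrite subrr normr0.
Qed.

End Continuity.

Definition hconcat (A B : Type) (H1 H2 : A * R -> B) (z : A * R) : B :=
  if z.2 <= 2^-1 then H1 (z.1, 2 * z.2) else H2 (z.1, 2 * z.2 - 1).

Lemma hconcat_pts (X Y : Defs.space) (H1 H2 : carrier X * R -> carrier Y) :
  (forall z, @pts (prodI X) z -> pts (H1 z)) ->
  (forall z, @pts (prodI X) z -> pts (H2 z)) ->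
  forall z, @pts (prodI X) z -> pts (hconcat H1 H2 z).
Proof.
move=> p1 p2 [x t] [/= px /andP[t0 t1]]; rewrite /hconcat /=.
by case: ifP => ht; [apply: p1 | apply: p2]; split => //=; apply/andP; split; lra.
Qed.

Section Concatenation.
Variables (V : choiceType) (S : fposet V) (Y : Defs.space).

Lemma real_openI (U1 U2 : ({fset V} -> R) -> Prop) :
  real_open S U1 -> real_open S U2 -> real_open S (fun p => U1 p /\ U2 p).
Proof.
move=> o1 o2 ch p chp pp sp [U1p U2p].
have [d1 d10 H1] := o1 ch p chp pp sp U1p.
have [d2 d20 H2] := o2 ch p chp pp sp U2p.
exists (Num.min d1 d2); first by rewrite lt_min d10 d20.
move=> q pq sq nq; split; [apply: H1 | apply: H2] => // x xc;
  by apply: lt_le_trans (nq x xc) _; rewrite ge_min lexx ?orbT.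
Qed.

Lemma prodI_open_reparam (H : ({fset V} -> R) * R -> carrier Y) (a : R -> R)
    (W : carrier Y -> Prop) p t :
  @cont (prodI (realization S)) Y H -> opn W ->
  (forall t t', `|a t - a t'| <= 2 * `|t - t'|) ->
  real_pt S p -> unit_interval (a t) -> W (H (p, a t)) ->
  exists U, [/\ real_open S U, U p & exists2 e, 0 < e &
    forall p' t', real_pt S p' -> U p' -> unit_interval (a t') -> `|t - t'| < e ->
      W (H (p', a t'))].
Proof.
move=> [_ oH] oW alip pp uat Wat.
have [W1 oW1 HW1] := oH W oW.
have [U [oU Up [e e0 He]]] := oW1 p (a t) pp uat (proj2 (HW1 (p, a t) (conj pp uat)) Wat).
exists U; split => //; exists (e / 2); first by lra.
move=> p' t' pp' Up' uat' lt; apply/(HW1 (p', a t')) => //.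
by apply: He => //; apply: le_lt_trans (alip t t') _; lra.
Qed.

Lemma cont_hconcat (H1 H2 : ({fset V} -> R) * R -> carrier Y) :
  @cont (prodI (realization S)) Y H1 -> @cont (prodI (realization S)) Y H2 ->
  (forall p, real_pt S p -> H1 (p, 1) = H2 (p, 0)) ->
  @cont (prodI (realization S)) Y (hconcat H1 H2).
Proof.
move=> c1 c2 e12; have [p1 _] := c1; have [p2 _] := c2.
have lip1 (t t' : R) : `|2 * t - 2 * t'| <= 2 * `|t - t'|.
  by rewrite -mulrBr normrM ger0_norm.
have lip2 (t t' : R) : `|(2 * t - 1) - (2 * t' - 1)| <= 2 * `|t - t'|.
  have -> : 2 * t - 1 - (2 * t' - 1) = 2 * (t - t') by ring.
  by rewrite normrM ger0_norm.
split=> [|W oW]; first exact: hconcat_pts p1 p2.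
exists (fun z => W (hconcat H1 H2 z)) => // p t pp /andP[t0 t1]; rewrite /hconcat /= => Wz.
have [tlt|tgt|teq] := ltgtP t (2^-1).
- rewrite ltW // in Wz.
  have [|U [oU Up [e e0 He]]] := prodI_open_reparam c1 oW lip1 pp _ Wz.
    by apply/andP; split; lra.
  exists U; split => //; exists (Num.min e (2^-1 - t)); first by rewrite lt_min e0 /=; lra.
  move=> p' t' pp' Up' /andP[t0' t1'] /=; rewrite lt_min => /andP[lte].
  rewrite ltr_norml => /andP[l _]; have -> : (t' <= 2^-1) = true by apply/idP; lra.
  by apply: He => //; apply/andP; split; lra.
- rewrite leNgt tgt /= in Wz.
  have [|U [oU Up [e e0 He]]] := prodI_open_reparam c2 oW lip2 pp _ Wz.
    by apply/andP; split; lra.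
  exists U; split => //; exists (Num.min e (t - 2^-1)); first by rewrite lt_min e0 /=; lra.
  move=> p' t' pp' Up' /andP[t0' t1'] /=; rewrite lt_min => /andP[lte].
  rewrite ltr_norml => /andP[_ l]; have -> : (t' <= 2^-1) = false.
    by apply/negbTE; rewrite -ltNge; lra.
  by apply: He => //; apply/andP; split; lra.
- subst t; rewrite lexx in Wz.
  have [|U1 [oU1 U1p [e1 e10 He1]]] := prodI_open_reparam c1 oW lip1 pp _ Wz.
    by apply/andP; split; lra.
  have h2 : 2 * 2^-1 - 1 = 0 :> R by field.
  have h1 : 2 * 2^-1 = 1 :> R by field.
  have Wz2 : W (H2 (p, 2 * 2^-1 - 1)) by rewrite h2 -e12 // -h1.
  have [|U2 [oU2 U2p [e2 e20 He2]]] := prodI_open_reparam c2 oW lip2 pp _ Wz2.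
    by rewrite h2; apply/andP; split; lra.
  exists (fun q => U1 q /\ U2 q); split => //; first exact: real_openI.
  exists (Num.min e1 e2); first by rewrite lt_min e10 e20.
  move=> p' t' pp' [Up1 Up2] /andP[t0' t1'] /=; rewrite lt_min => /andP[l1 l2].
  case: ifP => ht; first by apply: He1 => //; apply/andP; split; lra.
  move/negbT: ht; rewrite -ltNge => ht.
  by apply: He2 => //; apply/andP; split; lra.
Qed.

End Concatenation.

Section FiniteSums.
Implicit Types (I : eqType) (B : R).

Lemma sumr_neq0_seq I (s : seq I) (F : I -> R) :
  \sum_(i <- s) F i != 0 -> exists2 i, i \in s & F i != 0.
Proof.
move=> h; have [/hasP[i si Fi]|hn] := boolP (has (fun i => F i != 0) s); first by exists i.
case/eqP: h; rewrite big1_seq // => i /andP[_ si].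
by apply/eqP/negPn; apply: contra hn => Fi; apply/hasP; exists i.
Qed.

Lemma sumr_ge_term I (s : seq I) (F : I -> R) i : uniq s -> i \in s ->
  (forall j, j \in s -> 0 <= F j) -> F i <= \sum_(j <- s) F j.
Proof.
move=> us si F0; rewrite (bigD1_seq i) //= lerDl big_seq_cond.
by apply: sumr_ge0 => j /andP[sj _]; apply: F0.
Qed.

Lemma sumr_pick_uniq I (s : seq I) (i : I) (F : I -> R) : uniq s ->
  \sum_(j <- s) (if i == j then F j else 0) = if i \in s then F i else 0.
Proof.
move=> us; case: ifP => si.
  rewrite (bigD1_seq i) //= eqxx big1 ?addr0 // => j /negbTE.
  by rewrite eq_sym => ->.
rewrite big1_seq // => j /andP[_ sj]; case: eqP => // ij.
by rewrite ij sj in si.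
Qed.

Lemma sumr_le_size I (s : seq I) (F : I -> R) B :
  (forall i, i \in s -> F i <= B) -> \sum_(i <- s) F i <= B *+ size s.
Proof.
elim: s => [|i s IH] h; first by rewrite big_nil.
rewrite big_cons /= mulrS; apply: lerD; first by apply: h; rewrite mem_head.
by apply: IH => j sj; apply: h; rewrite inE sj orbT.
Qed.

Lemma finite_uniform_pos I (s : seq I) (Pr : I -> R -> Prop) :
  (forall i e e', 0 < e' -> e' <= e -> Pr i e -> Pr i e') ->
  (forall i, i \in s -> exists2 e, 0 < e & Pr i e) ->
  exists2 e, 0 < e & forall i, i \in s -> Pr i e.
Proof.
move=> mono; elim: s => [|i s IH] h; first by exists 1.
have [e1 e10 H1] := h i (mem_head _ _).
have [|e2 e20 H2] := IH; first by move=> j js; apply: h; rewrite inE js orbT.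
have e0 : 0 < Num.min e1 e2 by rewrite lt_min e10 e20.
exists (Num.min e1 e2) => // j; rewrite inE => /orP[/eqP ->|js].
  by apply: mono H1; rewrite // ge_min lexx.
by apply: mono (H2 j js); rewrite // ge_min lexx orbT.
Qed.

Lemma finite_strict_margin I (s : seq I) (a b : I -> R) (m : R) :
  exists2 d, 0 < d & forall i, i \in s ->
    (a i < m -> 2 * d <= m - a i) /\ (m < b i -> 2 * d <= b i - m).
Proof.
apply: finite_uniform_pos.
  by move=> i e e' _ e'e [h1 h2]; split => h; [have := h1 h | have := h2 h]; lra.
move=> i _; pose d1 := if a i < m then m - a i else 1.
pose d2 := if m < b i then b i - m else 1.
have d10 : 0 < d1 by rewrite /d1; case: ifP => h //; lra.
have d20 : 0 < d2 by rewrite /d2; case: ifP => h //; lra.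
have d0 : 0 < Num.min d1 d2 by rewrite lt_min d10 d20.
exists (Num.min d1 d2 / 2); first by lra.
have m1 : Num.min d1 d2 <= d1 by rewrite ge_min lexx.
have m2 : Num.min d1 d2 <= d2 by rewrite ge_min lexx orbT.
split => h; [move: m1; rewrite /d1 h | move: m2; rewrite /d2 h]; lra.
Qed.

End FiniteSums.

Section Supports.
Variable V : choiceType.
Implicit Types (p : {fset V} -> R) (c : seq {fset V}).

Lemma big_supp_eq c1 c2 p (F : {fset V} -> R) : uniq c1 -> uniq c2 ->
  supp_in c1 p -> supp_in c2 p -> (forall x, p x = 0 -> F x = 0) ->
  \sum_(x <- c1) F x = \sum_(x <- c2) F x.
Proof.
move=> u1 u2 s1 s2 F0.
have E c : \sum_(x <- c) F x = \sum_(x <- [seq x <- c | p x != 0]) F x.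
  rewrite big_filter [RHS]big_mkcond; apply: eq_bigr => x _.
  by case: (eqVneq (p x) 0) => //= /F0.
rewrite (E c1) (E c2); apply: perm_big; apply: uniq_perm; rewrite ?filter_uniq //.
move=> x; rewrite !mem_filter; case: (eqVneq (p x) 0) => //= h.
case: (boolP (x \in c1)) => h1; case: (boolP (x \in c2)) => h2 //.
- by rewrite s2 ?eqxx in h.
- by rewrite s1 ?eqxx in h.
Qed.

Lemma support_listP p c : uniq c -> supp_in c p ->
  uniq (support_list p) /\ supp_in (support_list p) p.
Proof.
move=> u s; have h : exists c, uniq c /\ supp_in c p by exists c.
exact: (xgetPex [::] h).
Qed.

Lemma big_support_list p c (F : {fset V} -> R) : uniq c -> supp_in c p ->
  (forall x, p x = 0 -> F x = 0) ->
  \sum_(x <- support_list p) F x = \sum_(x <- c) F x.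
Proof.
move=> u s F0; have [u' s'] := support_listP u s.
exact: big_supp_eq u' u s' s F0.
Qed.

Lemma real_pt_sum S p c : real_pt S p -> uniq c -> supp_in c p ->
  (forall x, 0 <= p x) /\ \sum_(x <- c) p x = 1.
Proof.
move=> [c' [[u' _ _] sp' p0 s1]] u sp; split => //.
by rewrite -s1; apply: big_supp_eq u u' sp sp' _.
Qed.

End Supports.

Section MassBelow.
Implicit Types a l t : R.

(* The length of [l, l + a] \cap (-oo, t], for a >= 0. *)
Definition mass_below a l t := Num.min a (Num.max 0 (t - l)).

Lemma mass_belowE a l t :
  mass_below a l t = if 0 <= t - l then (if a <= t - l then a else t - l)
                     else (if a <= 0 then a else 0).
Proof. by rewrite /mass_below maxEle; case: ifP => _; apply: minEle. Qed.

Local Ltac mass_below_cases a l t :=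
  rewrite mass_belowE; case: (lerP 0 (t - l)) => ?;
  [case: (lerP a (t - l)) | case: (lerP a 0)] => ?.

Lemma mass_below_ge0 a l t : 0 <= a -> 0 <= mass_below a l t.
Proof. by mass_below_cases a l t; lra. Qed.

Lemma mass_below_le a l t : mass_below a l t <= a.
Proof. by mass_below_cases a l t; lra. Qed.

Lemma mass_below0 l t : mass_below 0 l t = 0.
Proof. by apply/eqP; rewrite eq_le mass_below_le mass_below_ge0. Qed.

Lemma mass_below_gt0 a l t : 0 < mass_below a l t -> l < t.
Proof. by mass_below_cases a l t; lra. Qed.

Lemma mass_below_lt a l t : mass_below a l t < a -> t - l < a.
Proof. by mass_below_cases a l t; lra. Qed.

Lemma mass_below_full a l t : a <= t - l -> mass_below a l t = a.
Proof. by move=> ?; mass_below_cases a l t; lra. Qed.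

Lemma mass_below_none a l t : 0 <= a -> t <= l -> mass_below a l t = 0.
Proof.
move=> ??; mass_below_cases a l t; try done;
  by apply/eqP; rewrite eq_le; apply/andP; split; lra.
Qed.

Lemma mass_below_lipschitz a l t a' l' t' :
  `|mass_below a l t - mass_below a' l' t'| <= `|a - a'| + `|l - l'| + `|t - t'|.
Proof.
have m : `|Num.max 0 (t - l) - Num.max 0 (t' - l')| <= `|t - t'| + `|l - l'|.
  apply: le_trans (ler_normB (t - t') (l - l')); rewrite !maxEle.
  have [n1 n2] := (ler_norm (t - l - (t' - l')), ler_norm (t' - l' - (t - l))).
  rewrite distrC in n2; have -> : t - t' - (l - l') = t - l - (t' - l') by ring.
  rewrite ler_norml; case: (lerP 0 (t - l)) => ?; case: (lerP 0 (t' - l')) => ?;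
    by apply/andP; split; lra.
move: m; rewrite /mass_below; set u := Num.max 0 (t - l); set u' := Num.max 0 (t' - l').
have [n1 n2] := (ler_norm (a - a'), ler_norm (a' - a)); rewrite distrC in n2.
have [n3 n4] := (ler_norm (u - u'), ler_norm (u' - u)); rewrite distrC in n4.
have n5 := normr_ge0 (l - l'); have n6 := normr_ge0 (t - t').
rewrite !minEle => m; rewrite ler_norml.
by case: (lerP a u) => ?; case: (lerP a' u') => ?; apply/andP; split; lra.
Qed.

End MassBelow.

Section PrismFormula.
Variable V : choiceType.
Implicit Types (p q : {fset V} -> R) (c : seq {fset V}) (f g : {fset V} -> {fset V}).

(* Lay the masses of p end to end on [0, 1], x occupying
   [cum_mass c p x - p x, cum_mass c p x]; at time s the part of that interval
   below 1 - s goes to f x and the rest to g x.  When c is a chain and f <= g,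
   the result lives on the chain f x_1 <= ... <= f x_j <= g x_j <= ... <= g x_k. *)
Definition cum_mass c p x := \sum_(z <- c | z `<=` x) p z.

Lemma cum_massE c p x : cum_mass c p x = \sum_(z <- c) (if z `<=` x then p z else 0).
Proof. exact: big_mkcond. Qed.

Definition prism_share c p s x := mass_below (p x) (cum_mass c p x - p x) (1 - s).

Definition prism_term f g c p s y x :=
  (if f x == y then prism_share c p s x else 0) +
  (if g x == y then p x - prism_share c p s x else 0).

Definition prism_on f g c p s y := \sum_(x <- c) prism_term f g c p s y x.

Definition prism f g p s := prism_on f g (support_list p) p s.

Lemma prism_term0 f g c p s y x : p x = 0 -> prism_term f g c p s y x = 0.
Proof.
move=> px; rewrite /prism_term /prism_share px mass_below0 subrr.
by case: ifP; case: ifP; rewrite ?addr0.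
Qed.

Lemma prismE f g p c s : uniq c -> supp_in c p -> prism f g p s = prism_on f g c p s.
Proof.
move=> u sp; have [u' s'] := support_listP u sp.
have cumE x : cum_mass (support_list p) p x = cum_mass c p x.
  by rewrite !cum_massE; apply: (big_supp_eq u' u s' sp) => z ->; case: ifP.
apply: funext => y; rewrite /prism /prism_on (big_supp_eq u' u s' sp); last first.
  exact: prism_term0.
by apply: eq_bigr => x _; rewrite /prism_term /prism_share cumE.
Qed.

Lemma prism_term_ge0 f g c p s y x : 0 <= p x -> 0 <= prism_term f g c p s y x.
Proof.
move=> px; rewrite /prism_term /prism_share; apply: addr_ge0; case: ifP => _ //.
  exact: mass_below_ge0.
by rewrite subr_ge0 mass_below_le.
Qed.

Lemma prism_on_ge0 f g c p s y : (forall x, 0 <= p x) -> 0 <= prism_on f g c p s y.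
Proof. by move=> p0; apply: sumr_ge0 => x _; apply: prism_term_ge0. Qed.

Definition prism_witness f g c p s y := exists2 x, x \in c &
  (f x = y /\ cum_mass c p x - p x < 1 - s) \/ (g x = y /\ 1 - s < cum_mass c p x).

Lemma prism_on_witness f g c p s y : (forall x, 0 <= p x) ->
  prism_on f g c p s y != 0 -> prism_witness f g c p s y.
Proof.
move=> p0 /sumr_neq0_seq [x xc n]; exists x => //; have px := p0 x; move: n.
rewrite /prism_term /prism_share.
set a := mass_below (p x) (cum_mass c p x - p x) (1 - s).
have a0 : 0 <= a by apply: mass_below_ge0.
have ap : a <= p x by apply: mass_below_le.
have L1 : 0 < a -> cum_mass c p x - p x < 1 - s by move/mass_below_gt0.
have L2 : a < p x -> 1 - s < cum_mass c p x by move/mass_below_lt => h; lra.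
case: (eqVneq (f x) y) => hf; case: (eqVneq (g x) y) => hg /=.
- rewrite addrC subrK => hp; case: (eqVneq a 0) => ha.
    by right; split => //; apply: L2; rewrite ha lt_def hp px.
  by left; split => //; apply: L1; rewrite lt_def ha a0.
- by rewrite addr0 => ha; left; split => //; apply: L1; rewrite lt_def ha a0.
- rewrite add0r => hb; right; split => //; apply: L2.
  by rewrite lt_def ap andbT; apply: contra hb => /eqP ->; rewrite subrr.
- by rewrite addr0 eqxx.
Qed.

Lemma cum_mass_proper c p x x' : uniq c -> (forall z, 0 <= p z) -> x \in c ->
  x' `<=` x -> x' != x -> cum_mass c p x' <= cum_mass c p x - p x.
Proof.
move=> u p0 xc sub ne; rewrite !cum_massE (bigD1_seq x) //= (bigD1_seq x xc u) /=.
have -> : (x `<=` x') = false.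
  by apply/negP => h; move/negP: ne; apply; rewrite eqEfsubset sub h.
rewrite fsubset_refl add0r addrC addrK; apply: ler_sum => z _.
case: ifP => h1; last by case: ifP.
by rewrite (fsubset_trans h1 sub).
Qed.

Lemma cum_mass_le1 c p x : (forall z, 0 <= p z) -> \sum_(z <- c) p z = 1 ->
  cum_mass c p x <= 1.
Proof.
by move=> p0 s1; rewrite -s1 cum_massE; apply: ler_sum => z _; case: ifP.
Qed.

Lemma cum_mass_ge c p x : uniq c -> supp_in c p -> (forall z, 0 <= p z) ->
  p x <= cum_mass c p x.
Proof.
move=> u sp p0; rewrite cum_massE; case: (boolP (x \in c)) => xc.
  have := sumr_ge_term (F := fun z => if z `<=` x then p z else 0) u xc.
  by rewrite fsubset_refl; apply => z _; case: ifP.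
by rewrite sp //; apply: sumr_ge0 => z _; case: ifP.
Qed.

(* The case of witness comparability that monotonicity of f <= g does not settle. *)
Definition no_crossing c p s q s' := forall x x', x \in c -> x' \in c ->
  x' `<=` x -> x' != x -> cum_mass c p x - p x < 1 - s -> 1 - s' < cum_mass c q x' -> False.

Lemma no_crossing_refl c p s : uniq c -> (forall z, 0 <= p z) -> no_crossing c p s p s.
Proof.
move=> u p0 x x' xc x'c sub ne h1 h2.
by have := cum_mass_proper u p0 xc sub ne; lra.
Qed.

Lemma prism_on0 f g c p : (forall z, 0 <= p z) -> \sum_(z <- c) p z = 1 ->
  prism_on f g c p 0 = fun y => \sum_(x <- c) (if f x == y then p x else 0).
Proof.
move=> p0 s1; apply: funext => y; apply: eq_bigr => x _.
rewrite /prism_term /prism_share mass_below_full ?subrr; last first.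
  by have := cum_mass_le1 x p0 s1; lra.
by case: ifP; case: ifP; rewrite ?addr0.
Qed.

Lemma prism_on1 f g c p : uniq c -> supp_in c p -> (forall z, 0 <= p z) ->
  prism_on f g c p 1 = fun y => \sum_(x <- c) (if g x == y then p x else 0).
Proof.
move=> u sp p0; apply: funext => y; apply: eq_bigr => x _.
rewrite /prism_term /prism_share mass_below_none ?subr0 //; last first.
  by have := cum_mass_ge x u sp p0; lra.
by case: ifP; case: ifP; rewrite ?add0r.
Qed.

Lemma prism_on_fixed f g c p s :
  (forall x, x \in c -> p x != 0 -> f x = x /\ g x = x) ->
  prism_on f g c p s = fun y => \sum_(x <- c) (if x == y then p x else 0).
Proof.
move=> h; apply: funext => y; apply: eq_big_seq => x xc.
case: (eqVneq (p x) 0) => hp; first by rewrite prism_term0 // hp; case: ifP.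
rewrite /prism_term; have [-> ->] := h x xc hp; case: ifP => _; last by rewrite addr0.
by rewrite addrC subrK.
Qed.

End PrismFormula.

Section PrismChain.
Variables (V : choiceType) (S T : fposet V) (f g : {fset V} -> {fset V}).
Hypothesis fST : forall x, S x -> T (f x).
Hypothesis gST : forall x, S x -> T (g x).
Hypothesis f_mono : forall x y, S x -> S y -> x `<=` y -> f x `<=` f y.
Hypothesis g_mono : forall x y, S x -> S y -> x `<=` y -> g x `<=` g y.
Hypothesis f_le_g : forall x, S x -> f x `<=` g x.
Implicit Types (p q : {fset V} -> R) (c : seq {fset V}).

Lemma prism_witness_comparable c p s q s' y1 y2 : (forall x, x \in c -> S x) ->
  (forall x y, x \in c -> y \in c -> (x `<=` y) || (y `<=` x)) ->
  prism_witness f g c p s y1 -> prism_witness f g c q s' y2 ->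
  no_crossing c p s q s' -> no_crossing c q s' p s ->
  (y1 `<=` y2) || (y2 `<=` y1).
Proof.
move=> cS cC [x1 x1c h1] [x2 x2c h2] n12 n21.
have S1 := cS _ x1c; have S2 := cS _ x2c.
case: h1 => [[<- l1]|[<- l1]]; case: h2 => [[<- l2]|[<- l2]];
  case/orP: (cC _ _ x1c x2c) => h.
- by rewrite (f_mono S1 S2 h).
- by rewrite (f_mono S2 S1 h) orbT.
- by rewrite (fsubset_trans (f_mono S1 S2 h) (f_le_g S2)).
- case: (eqVneq x2 x1) => [e|ne]; first by subst; rewrite (f_le_g S1).
  by case: (n12 _ _ x1c x2c h ne l1 l2).
- case: (eqVneq x1 x2) => [e|ne]; first by subst; rewrite (f_le_g S1) orbT.
  by case: (n21 _ _ x2c x1c h ne l2 l1).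
- by rewrite (fsubset_trans (f_mono S2 S1 h) (f_le_g S1)) orbT.
- by rewrite (g_mono S1 S2 h).
- by rewrite (g_mono S2 S1 h) orbT.
Qed.

Definition prism_candidates c := map f c ++ map g c.

Lemma prism_on_candidate c p s y : (forall x, 0 <= p x) ->
  prism_on f g c p s y != 0 -> y \in prism_candidates c.
Proof.
move=> p0 /(prism_on_witness p0) [x xc [[<- _]|[<- _]]];
  by rewrite mem_cat map_f ?orbT.
Qed.

Lemma prism_candidate_T c y : (forall x, x \in c -> S x) ->
  y \in prism_candidates c -> T y.
Proof.
by move=> cS; rewrite mem_cat => /orP[] /mapP [x xc ->]; [apply: fST | apply: gST];
  apply: cS.
Qed.

Lemma prism_on_total c p s (L : seq {fset V}) : uniq c -> (forall x, 0 <= p x) ->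
  uniq L -> (forall y, prism_on f g c p s y != 0 -> y \in L) ->
  \sum_(y <- L) prism_on f g c p s y = \sum_(x <- c) p x.
Proof.
move=> u p0 uL hL; rewrite /prism_on exchange_big /=; apply: eq_big_seq => x xc.
rewrite /prism_term big_split /= !(sumr_pick_uniq _ (fun _ => _)) //.
set a := prism_share c p s x.
have a0 : 0 <= a by apply: mass_below_ge0.
have ap : a <= p x by apply: mass_below_le.
have term_le y : prism_term f g c p s y x <= prism_on f g c p s y.
  by apply: sumr_ge_term => // z _; apply: prism_term_ge0.
have in_L y b : 0 <= b -> b <= prism_term f g c p s y x ->
    (if y \in L then b else 0) = b.
  case: ifP => // yL b0 bt; apply/eqP; rewrite eq_sym; apply: contraFT yL => nb.
  apply: hL; apply: lt0r_neq0; apply: lt_le_trans (term_le y).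
  by apply: lt_le_trans bt; rewrite lt0r nb.
rewrite (in_L (f x) a) //; last first.
  by rewrite /prism_term eqxx lerDl; case: ifP => // _; rewrite subr_ge0.
rewrite (in_L (g x) (p x - a)) ?subr_ge0 //; first by rewrite addrC subrK.
by rewrite /prism_term eqxx lerDr; case: ifP.
Qed.

Lemma prism_on_joint_chain c p s q s' : is_chain S c ->
  (forall x, 0 <= p x) -> (forall x, 0 <= q x) ->
  no_crossing c p s q s' -> no_crossing c q s' p s ->
  is_chain T (seq_fset tt [seq y <- prism_candidates c |
    (prism_on f g c p s y != 0) || (prism_on f g c q s' y != 0)]).
Proof.
move=> [u cS cC] p0 q0 nPQ nQP.
have wit y : y \in seq_fset tt [seq y <- prism_candidates c |
    (prism_on f g c p s y != 0) || (prism_on f g c q s' y != 0)] ->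
    prism_witness f g c p s y \/ prism_witness f g c q s' y.
  by rewrite seq_fsetE mem_filter => /andP[/orP[] h _]; [left|right];
    apply: prism_on_witness.
split; first exact: fset_uniq.
  by move=> y; rewrite seq_fsetE mem_filter => /andP[_]; apply: prism_candidate_T cS.
move=> y1 y2 /wit[w1|w1] /wit[w2|w2];
  by apply: (prism_witness_comparable cS cC w1 w2) => //; apply: no_crossing_refl.
Qed.

Lemma prism_on_real_pt c p s : is_chain S c -> supp_in c p -> (forall x, 0 <= p x) ->
  \sum_(x <- c) p x = 1 -> real_pt T (prism_on f g c p s).
Proof.
move=> chc sp p0 s1; have [u _ _] := chc; have npp := no_crossing_refl (s := s) u p0.
have := prism_on_joint_chain chc p0 p0 npp npp.
set Z := seq_fset tt _ => chZ.
have inZ y : prism_on f g c p s y != 0 -> y \in Z.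
  by move=> h; rewrite seq_fsetE mem_filter h; apply: prism_on_candidate p0 h.
exists Z; split => //.
- by move=> y yZ; apply/eqP; apply: contraNT yZ; apply: inZ.
- by move=> y; apply: prism_on_ge0.
- by rewrite (prism_on_total u p0 (fset_uniq _) inZ).
Qed.

End PrismChain.

Section PrismLipschitz.
Variables (V : choiceType) (f g : {fset V} -> {fset V}).
Implicit Types (p q : {fset V} -> R) (c : seq {fset V}).

Lemma cum_mass_dist c p q x :
  `|cum_mass c p x - cum_mass c q x| <= \sum_(z <- c) `|p z - q z|.
Proof.
rewrite !cum_massE -sumrB; apply: le_trans (ler_norm_sum _ _ _) _.
by apply: ler_sum => z _; case: ifP => _ //; rewrite subrr normr0.
Qed.

Lemma dist_le_sum_dist c p q x : uniq c -> x \in c ->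
  `|p x - q x| <= \sum_(z <- c) `|p z - q z|.
Proof. by move=> u xc; apply: (sumr_ge_term (F := fun z => `|p z - q z|)). Qed.

Lemma prism_term_lipschitz c p q s s' y x : uniq c -> x \in c ->
  `|prism_term f g c p s y x - prism_term f g c q s' y x| <=
    9 * (\sum_(z <- c) `|p z - q z| + `|s - s'|).
Proof.
move=> u xc; have hc := cum_mass_dist c p q x.
have hp := dist_le_sum_dist p q u xc.
have hD : 0 <= \sum_(z <- c) `|p z - q z| by apply: sumr_ge0.
set D := \sum_(z <- c) `|p z - q z| in hc hp hD *; clearbody D.
have hs := normr_ge0 (s - s').
have hl := mass_below_lipschitz (p x) (cum_mass c p x - p x) (1 - s)
  (q x) (cum_mass c q x - q x) (1 - s').
have e1 : `|cum_mass c p x - p x - (cum_mass c q x - q x)| <=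
    `|cum_mass c p x - cum_mass c q x| + `|p x - q x|.
  have -> : cum_mass c p x - p x - (cum_mass c q x - q x) =
    (cum_mass c p x - cum_mass c q x) - (p x - q x) by ring.
  exact: ler_normB.
have e2 : `|1 - s - (1 - s')| = `|s - s'|.
  have -> : 1 - s - (1 - s') = - (s - s') by ring.
  by rewrite normrN.
rewrite e2 /prism_term /prism_share in hl *.
set a := mass_below (p x) _ _ in hl *; set b := mass_below (q x) _ _ in hl *.
clearbody a b.
have hab : `|a - b| <= 4 * (D + `|s - s'|) by lra.
have hab' : `|p x - a - (q x - b)| <= 5 * (D + `|s - s'|).
  have -> : p x - a - (q x - b) = (p x - q x) - (a - b) by ring.
  by apply: le_trans (ler_normB _ _) _; lra.
case: ifP => _; case: ifP => _; rewrite ?addr0 ?add0r ?subrr ?oppr0 ?normr0; try lra.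
have -> : a + (p x - a) - (b + (q x - b)) = p x - q x by ring.
lra.
Qed.

Lemma prism_on_lipschitz c p q s s' y : uniq c ->
  `|prism_on f g c p s y - prism_on f g c q s' y| <=
    (9 * (\sum_(z <- c) `|p z - q z| + `|s - s'|)) *+ size c.
Proof.
move=> u; rewrite /prism_on -sumrB; apply: le_trans (ler_norm_sum _ _ _) _.
by apply: sumr_le_size => x xc; apply: prism_term_lipschitz.
Qed.

Lemma no_crossing_near c p s q s' d : uniq c ->
  (forall z, 0 <= p z) -> (forall z, 0 <= q z) ->
  (forall x, x \in c ->
    (cum_mass c p x - p x < 1 - s -> 2 * d <= 1 - s - (cum_mass c p x - p x)) /\
    (1 - s < cum_mass c p x -> 2 * d <= cum_mass c p x - (1 - s))) ->
  \sum_(z <- c) `|p z - q z| + `|s - s'| < d ->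
  no_crossing c p s q s' /\ no_crossing c q s' p s.
Proof.
move=> u p0 q0 margin.
set D := \sum_(z <- c) `|p z - q z| => near.
have [n1 n2] := (ler_norm (s - s'), ler_norm (s' - s)); rewrite distrC in n2.
split=> x x' xc x'c sub ne l1 l2.
- have m := proj1 (margin x xc) l1; have pr := cum_mass_proper u q0 xc sub ne.
  have h1 := dist_le_sum_dist p q u xc; have h2 := cum_mass_dist c p q x.
  rewrite -/D in h1 h2.
  have [h3 h4] := (ler_norm (p x - q x), ler_norm (q x - p x)); rewrite distrC in h4.
  have [h5 h6] := (ler_norm (cum_mass c p x - cum_mass c q x),
    ler_norm (cum_mass c q x - cum_mass c p x)); rewrite distrC in h6.
  by clearbody D; lra.
- have m := proj2 (margin x' x'c) l2; have pr := cum_mass_proper u q0 xc sub ne.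
  have h1 := cum_mass_dist c p q x'; rewrite -/D in h1.
  have [h5 h6] := (ler_norm (cum_mass c p x' - cum_mass c q x'),
    ler_norm (cum_mass c q x' - cum_mass c p x')); rewrite distrC in h6.
  by clearbody D; lra.
Qed.

End PrismLipschitz.

Lemma real_open_uniform (V : choiceType) (T : fposet V) (W : ({fset V} -> R) -> Prop)
    w (E : seq {fset V}) :
  real_open T W -> real_pt T w -> W w ->
  exists2 e, 0 < e & forall Z : {fset {fset V}}, Z `<=` seq_fset tt E ->
    is_chain T Z -> supp_in Z w -> forall w', real_pt T w' -> supp_in Z w' ->
    (forall y, y \in Z -> `|w y - w' y| < e) -> W w'.
Proof.
move=> oW ww Ww.
have [e e0 He] : exists2 e, 0 < e & forall Z, Z \in enum_fset (fpowerset (seq_fset tt E)) ->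
    is_chain T Z -> supp_in Z w -> forall w', real_pt T w' -> supp_in Z w' ->
    (forall y, y \in Z -> `|w y - w' y| < e) -> W w'.
  apply: finite_uniform_pos.
    move=> Z e1 e2 _ e21 H ch sw w' w'r sw' near; apply: H => // y yZ.
    exact: lt_le_trans (near y yZ) e21.
  move=> Z _; case: (pselect (is_chain T Z /\ supp_in Z w)) => [[ch sw]|hn].
    have [e1 e10 H1] := oW Z w ch ww sw Ww.
    by exists e1 => // _ _ w' w'r sw' near; apply: H1.
  by exists 1 => // ch sw; case: hn.
by exists e => // Z ZE; apply: He; rewrite -fpowersetE in ZE.
Qed.

Section PrismContinuity.
Variables (V : choiceType) (S T : fposet V) (f g : {fset V} -> {fset V}).
Hypothesis fST : forall x, S x -> T (f x).
Hypothesis gST : forall x, S x -> T (g x).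
Hypothesis f_mono : forall x y, S x -> S y -> x `<=` y -> f x `<=` f y.
Hypothesis g_mono : forall x y, S x -> S y -> x `<=` y -> g x `<=` g y.
Hypothesis f_le_g : forall x, S x -> f x `<=` g x.
Implicit Types (p q : {fset V} -> R) (c : seq {fset V}).

Lemma prism_on_nbhd (W : ({fset V} -> R) -> Prop) c p s :
  real_open T W -> is_chain S c -> real_pt S p -> supp_in c p -> W (prism_on f g c p s) ->
  exists2 d, 0 < d & forall q s', real_pt S q -> supp_in c q ->
    (forall x, x \in c -> `|p x - q x| < d) -> `|s - s'| < d -> W (prism_on f g c q s').
Proof.
move=> oW chc pp sp Wp; have [u cS cC] := chc; have [p0 s1] := real_pt_sum pp u sp.
have [e e0 He] := real_open_uniform (prism_candidates f g c) oW
  (prism_on_real_pt fST gST f_mono g_mono f_le_g s chc sp p0 s1) Wp.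
have [dm dm0 margin] :=
  finite_strict_margin c (fun x => cum_mass c p x - p x) (cum_mass c p) (1 - s).
pose K : R := (size c)%:R; have K0 : 0 <= K by rewrite ler0n.
pose m := Num.min dm (e / (9 * K + 1)).
have m0 : 0 < m by rewrite lt_min dm0 /= divr_gt0 //; lra.
have mdm : m <= dm by rewrite ge_min lexx.
have me : m * (9 * K + 1) <= e by rewrite -ler_pdivlMr ?ge_min ?lexx ?orbT //; lra.
exists (m / (K + 1)); first by rewrite divr_gt0 //; lra.
move=> q s' qr sq nq ns; have [q0 q1] := real_pt_sum qr u sq.
have hS : \sum_(z <- c) `|p z - q z| <= m / (K + 1) * K.
  apply: le_trans (sumr_le_size (B := m / (K + 1)) _) _; last by rewrite /K mulr_natr.
  by move=> z zc; apply: ltW (nq z zc).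
have eK : m / (K + 1) * K + m / (K + 1) = m by field; lra.
have hD : \sum_(z <- c) `|p z - q z| + `|s - s'| < m by lra.
have [nPQ nQP] := no_crossing_near u p0 q0 margin (lt_le_trans hD mdm).
have := prism_on_joint_chain fST gST f_mono g_mono f_le_g chc p0 q0 nPQ nQP.
set Z := seq_fset tt _ => chZ.
have memZ y : (y \in Z) = ((prism_on f g c p s y != 0) || (prism_on f g c q s' y != 0))
    && (y \in prism_candidates f g c).
  by rewrite seq_fsetE mem_filter.
apply: (He Z) => //.
- by apply/fsubsetP => y; rewrite memZ seq_fsetE => /andP[].
- move=> y yZ; apply/eqP; apply: contraNT yZ => h; rewrite memZ h /=.
  exact: prism_on_candidate p0 h.
- exact: (prism_on_real_pt fST gST f_mono g_mono f_le_g s' chc sq q0 q1).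
- move=> y yZ; apply/eqP; apply: contraNT yZ => h; rewrite memZ h orbT /=.
  exact: prism_on_candidate q0 h.
- move=> y _; apply: le_lt_trans (prism_on_lipschitz f g p q s s' y u) _.
  rewrite -mulr_natr -/K; apply: lt_le_trans me.
  have hK : (\sum_(z <- c) `|p z - q z| + `|s - s'|) * K <= m * K.
    by apply: ler_wpM2r => //; lra.
  have -> : m * (9 * K + 1) = 9 * (m * K) + m by ring.
  lra.
Qed.

Lemma prism_real_pt p s : real_pt S p -> real_pt T (prism f g p s).
Proof.
move=> pp; have [c [chc sp _ _]] := pp; have [u _ _] := chc.
have [p0 s1] := real_pt_sum pp u sp.
rewrite (prismE f g s u sp).
exact: (prism_on_real_pt fST gST f_mono g_mono f_le_g s chc sp p0 s1).
Qed.

Lemma cont_prism :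
  @cont (prodI (realization S)) (realization T) (fun z => prism f g z.1 z.2).
Proof.
split=> [[p s] [/= pp _]|W oW]; first exact: prism_real_pt.
exists (fun z => W (prism f g z.1 z.2)) => // p0 s0 pp0 /andP[s00 s01] /= Wp0.
have [c0 [chc0 sp0 _ _]] := pp0; have [u0 _ _] := chc0.
rewrite (prismE f g s0 u0 sp0) in Wp0.
have [d0 d00 Hd0] := prism_on_nbhd oW chc0 pp0 sp0 Wp0.
pose e := d0 / 2; have e0 : 0 < e by rewrite /e; lra.
(* Compactness of the time interval makes the set of points whose whole slab
   [s0 - e, s0 + e] lands in W open. *)
exists (fun p => real_pt S p /\
  forall t, unit_interval t -> `|s0 - t| <= e -> W (prism f g p t)); split.
- move=> c p chc pp sp [_ Up]; have [u _ _] := chc.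
  pose a := Num.max 0 (s0 - e); pose b := Num.min 1 (s0 + e).
  have ab : a <= b by rewrite ge_max !le_min; apply/andP; split; apply/andP; split; lra.
  have inab t : a <= t <= b -> unit_interval t /\ `|s0 - t| <= e.
    rewrite ge_max le_min => /andP[/andP[h1 h2] /andP[h3 h4]].
    by split; [apply/andP; split | rewrite ler_norml; apply/andP; split; lra].
  pose Near d q := real_pt S q /\ supp_in c q /\ forall x, x \in c -> `|p x - q x| < d.
  have Nmono d1 d2 q : d2 <= d1 -> Near d2 q -> Near d1 q.
    by move=> h [qr [sq nq]]; do 2!split => //; move=> x xc; apply: lt_le_trans (nq x xc) h.
  have [|d d_pos Hd] :=
    @interval_uniform_radius _ (fun q t => W (prism f g q t)) Near a b Nmono ab.
    move=> t tab; have [ut st] := inab t tab.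
    have Wt := Up t ut st; rewrite (prismE f g t u sp) in Wt.
    have [dt dt0 Hdt] := prism_on_nbhd oW chc pp sp Wt.
    exists dt => // q t' [qr [sq nq]] tt' _.
    by rewrite (prismE f g t' u sq); apply: Hdt.
  exists d => // q qr sq nq; split => // t /andP[t0 t1] st.
  apply: (Hd q (conj qr (conj sq nq))); move: st; rewrite ler_norml => /andP[h1 h2].
  by rewrite ge_max le_min; apply/andP; split; apply/andP; split; lra.
- split => // t ut st; rewrite (prismE f g t u0 sp0); apply: Hd0 => //.
    by move=> x _; rewrite subrr normr0.
  by apply: le_lt_trans st _; rewrite /e; lra.
- by exists e => // p' t' pp' [_ Up'] ut' lt; apply: Up' => //; apply: ltW.
Qed.

End PrismContinuity.

Section RealizeMap.
Variable V : choiceType.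
Implicit Types (S T : fposet V) (f g r : {fset V} -> {fset V}) (p : {fset V} -> R)
  (c : seq {fset V}).

Lemma realize_mapE f p c : uniq c -> supp_in c p ->
  realize_map f p = fun y => \sum_(x <- c) (if f x == y then p x else 0).
Proof.
move=> u s; apply: funext => y; rewrite /realize_map big_mkcond.
by apply: big_support_list => // x ->; case: ifP.
Qed.

Lemma realize_map_id S p : real_pt S p -> realize_map id p = p.
Proof.
move=> [c [[u _ _] sp _ _]]; rewrite (realize_mapE _ u sp); apply: funext => y.
rewrite (eq_bigr (fun x => if y == x then p x else 0)); last by move=> x _; rewrite eq_sym.
by rewrite sumr_pick_uniq //; case: ifP => // /negbT /sp ->.
Qed.

Lemma realize_map_neq0 f p c y : uniq c -> supp_in c p -> realize_map f p y != 0 ->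
  exists2 x, x \in c & f x = y /\ p x != 0.
Proof.
move=> u sp; rewrite (realize_mapE _ u sp) => /sumr_neq0_seq [x xc].
by case: (eqVneq (f x) y) => [<- h|_]; [exists x | rewrite eqxx].
Qed.

Lemma realize_map_comp S f r p : real_pt S p ->
  realize_map (r \o f) p = realize_map r (realize_map f p).
Proof.
move=> [c [[u _ _] sp _ _]].
have sL : supp_in (undup (map f c)) (realize_map f p).
  move=> y yL; apply/eqP; apply: contraNT yL => /(realize_map_neq0 u sp) [x xc [<- _]].
  by rewrite mem_undup map_f.
rewrite (realize_mapE _ (undup_uniq _) sL) (realize_mapE _ u sp); apply: funext => z.
rewrite (realize_mapE _ u sp).
have E y : (if r y == z then \sum_(x <- c) (if f x == y then p x else 0) else 0) =
    \sum_(x <- c) (if f x == y then (if r y == z then p x else 0) else 0).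
  case: ifP => _; first by apply: eq_bigr => x _; case: ifP.
  by rewrite big1 // => x _; case: ifP.
rewrite (eq_bigr _ (fun y _ => E y)) exchange_big /=; apply: eq_big_seq => x xc.
by rewrite (sumr_pick_uniq _ (fun y => if r y == z then p x else 0)) ?undup_uniq //
  mem_undup map_f.
Qed.

Lemma realize_map_const S p (m : {fset V}) : real_pt S p ->
  realize_map (fun _ => m) p = fun y => if m == y then 1 else 0.
Proof.
move=> pp; have [c [[u _ _] sp _ _]] := pp; have [p0 s1] := real_pt_sum pp u sp.
by rewrite (realize_mapE _ u sp); apply: funext => y; case: eqP => _ //; rewrite big1.
Qed.

Lemma prism0 S f g p : real_pt S p -> prism f g p 0 = realize_map f p.
Proof.
move=> pp; have [c [[u _ _] sp _ _]] := pp; have [p0 s1] := real_pt_sum pp u sp.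
by rewrite (prismE f g 0 u sp) (prism_on0 f g p0 s1) (realize_mapE _ u sp).
Qed.

Lemma prism1 S f g p : real_pt S p -> prism f g p 1 = realize_map g p.
Proof.
move=> pp; have [c [[u _ _] sp _ _]] := pp; have [p0 s1] := real_pt_sum pp u sp.
by rewrite (prismE f g 1 u sp) (prism_on1 f g u sp p0) (realize_mapE _ u sp).
Qed.

Lemma prism_fixed S f g p s : real_pt S p ->
  (forall y, p y != 0 -> f y = y /\ g y = y) -> prism f g p s = p.
Proof.
move=> pp h; have [c [[u _ _] sp _ _]] := pp.
rewrite (prismE f g s u sp) (prism_on_fixed s (c := c)); last by move=> x _; apply: h.
by rewrite -(realize_mapE _ u sp) (realize_map_id pp).
Qed.

Section Monotone.
Variables (S T : fposet V) (f : {fset V} -> {fset V}).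
Hypothesis fST : forall x, S x -> T (f x).
Hypothesis f_mono : forall x y, S x -> S y -> x `<=` y -> f x `<=` f y.

Lemma realize_map_real_pt p : real_pt S p -> real_pt T (realize_map f p).
Proof.
move=> pp; rewrite -(prism0 f f pp).
by apply: (prism_real_pt fST fST f_mono f_mono) => // x _; apply: fsubset_refl.
Qed.

Lemma cont_realize_map : @cont (realization S) (realization T) (realize_map f).
Proof.
have u0 : unit_interval (0 : R) by apply/andP; split; lra.
have := cont_comp (cont_slice S u0)
  (cont_prism fST fST f_mono f_mono (fun x _ => fsubset_refl (f x))).
by apply: cont_eq => p pp /=; apply: prism0 pp.
Qed.

End Monotone.
End RealizeMap.

Section Retract.
Variables (V : choiceType) (S T : fposet V) (f r : {fset V} -> {fset V}).
Hypothesis fST : forall x, S x -> T (f x).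
Hypothesis rTS : forall x, T x -> S (r x).
Hypothesis f_mono : forall x y, S x -> S y -> x `<=` y -> f x `<=` f y.
Hypothesis r_mono : forall x y, T x -> T y -> x `<=` y -> r x `<=` r y.
Hypothesis rK : forall x, S x -> r (f x) = x.

Lemma realize_map_retract p : real_pt S p -> realize_map r (realize_map f p) = p.
Proof.
move=> pp; have [c [[u cS _] sp _ _]] := pp.
rewrite -(realize_map_comp _ _ pp).
transitivity (realize_map id p); last exact: realize_map_id pp.
rewrite !(realize_mapE _ u sp); apply: funext => y; apply: eq_big_seq => x xc /=.
by rewrite (rK (cS x xc)).
Qed.

Lemma poset_weak_equivalence_of_homotopy (H : ({fset V} -> R) * R -> {fset V} -> R) :
  @cont (prodI (realization T)) (realization T) H ->
  (forall q, real_pt T q -> H (q, 0) = realize_map f (realize_map r q)) ->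
  (forall q, real_pt T q -> H (q, 1) = q) ->
  (forall p s, real_pt S p -> unit_interval s ->
    H (realize_map f p, s) = realize_map f p) ->
  poset_weak_equivalence S T f.
Proof.
move=> Hc H0 H1 Hf.
have fc := cont_realize_map fST f_mono; have rc := cont_realize_map rTS r_mono.
do 2!split => //; split => // n x px; split.
- move=> g [gc gb]; exists (realize_map r \o g).
    by split=> [|t ut bt /=]; [apply: cont_comp gc rc | rewrite gb // realize_map_retract].
  exists (fun z => H (g z.1, z.2)); split.
  + exact: cont_comp (cont_prodI gc) Hc.
  + by move=> t ut /=; rewrite H0 //; apply: gc.1.
  + by move=> t ut /=; rewrite H1 //; apply: gc.1.
  + by move=> t s ut bt us /=; rewrite gb // Hf // realize_map_retract.
- move=> h1 h2 [h1c _] [h2c _] [G [Gc G0 G1 Gb]].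
  exists (realize_map r \o G); split.
  + exact: cont_comp Gc rc.
  + by move=> t ut /=; rewrite G0 //= realize_map_retract //; apply: h1c.1.
  + by move=> t ut /=; rewrite G1 //= realize_map_retract //; apply: h2c.1.
  + by move=> t s ut bt us /=; rewrite Gb //= realize_map_retract //; apply: h1c.1.
Qed.

Variable h : {fset V} -> {fset V}.
Hypothesis hTT : forall x, T x -> T (h x).
Hypothesis h_mono : forall x y, T x -> T y -> x `<=` y -> h x `<=` h y.
Hypothesis fr_le_h : forall x, T x -> f (r x) `<=` h x.
Hypothesis le_h : forall x, T x -> x `<=` h x.
Hypothesis h_fixes_f : forall x, S x -> h (f x) = f x.

Lemma poset_weak_equivalence_of_retract : poset_weak_equivalence S T f.
Proof.
have frT x : T x -> T (f (r x)) by move=> Tx; apply/fST/rTS.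
have fr_mono x y : T x -> T y -> x `<=` y -> f (r x) `<=` f (r y).
  by move=> Tx Ty xy; apply: f_mono; [apply: rTS | apply: rTS | apply: r_mono].
apply: (poset_weak_equivalence_of_homotopy (H := hconcat
  (fun z => prism (f \o r) h z.1 z.2) (fun z => prism id h z.1 (1 - z.2)))).
- apply: cont_hconcat; first exact: (cont_prism frT hTT fr_mono h_mono fr_le_h).
    have idT x : T x -> T (id x) by [].
    have id_mono x y : T x -> T y -> x `<=` y -> id x `<=` id y by [].
    exact: (cont_comp (cont_prodI_rev _) (cont_prism idT hTT id_mono h_mono le_h)).
  by move=> q qT /=; rewrite subr0 !(prism1 _ _ qT).
- move=> q qT; rewrite /hconcat /= mulr0 ifT; last by rewrite invr_ge0.
  by rewrite (prism0 _ _ qT) (realize_map_comp _ _ qT).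
- move=> q qT; rewrite /hconcat /= ifF; last by apply/negbTE; rewrite -ltNge; lra.
  have -> : 1 - (2 * 1 - 1) = 0 :> R by ring.
  by rewrite (prism0 _ _ qT) (realize_map_id qT).
- move=> p s pS _; have fpT := realize_map_real_pt fST f_mono pS.
  have fixed y : realize_map f p y != 0 -> f (r y) = y /\ h y = y.
    have [c [[u cS _] sp _ _]] := pS.
    move=> /(realize_map_neq0 u sp) [x xc [<- _]]; have Sx := cS x xc.
    by rewrite rK // h_fixes_f.
  rewrite /hconcat; case: ifP => _; first exact: prism_fixed fpT fixed.
  by apply: prism_fixed fpT _ => y /fixed[_ ->].
Qed.

End Retract.

Lemma poset_contractible_of_bottom (V : choiceType) (S : fposet V) (m : {fset V}) :
  S m -> (forall x, S x -> m `<=` x) -> poset_contractible S.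
Proof.
move=> Sm m_le; pose x0 := fun y : {fset V} => if m == y then (1 : R) else 0.
exists x0.
  exists [:: m]; split.
  - split => //; first by move=> x; rewrite inE => /eqP ->.
    by move=> x y; rewrite !inE => /eqP -> /eqP ->; rewrite fsubset_refl.
  - by move=> y; rewrite inE /x0 eq_sym => /negbTE ->.
  - by move=> y; rewrite /x0; case: ifP.
  - by rewrite big_cons big_nil /x0 eqxx addr0.
exists (fun z => prism (fun _ => m) id z.1 (1 - z.2)); split.
- exact: (cont_comp (cont_prodI_rev _) (@cont_prism _ S S (fun _ => m) id
    (fun _ _ => Sm) (fun _ Sx => Sx) (fun _ _ _ _ _ => fsubset_refl m)
    (fun _ _ _ _ xy => xy) m_le)).
- by move=> x xS /=; rewrite subr0 (prism1 _ _ xS) (realize_map_id xS).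
- by move=> x xS /=; rewrite subrr (prism0 _ _ xS) (realize_map_const _ xS).
Qed.

Section FsetSep.
Variable V : choiceType.
Implicit Types (t : {fset V}) (Q : V -> Prop).

Definition fsep t Q := [fset w in t | `[< Q w >]].

Lemma in_fsep t Q v : (v \in fsep t Q) = (v \in t) && `[< Q v >].
Proof. by rewrite !inE. Qed.

Lemma fsep_sub t Q : fsep t Q `<=` t.
Proof. by apply/fsubsetP => v; rewrite in_fsep => /andP[]. Qed.

Lemma fsepS t t' Q : t `<=` t' -> fsep t Q `<=` fsep t' Q.
Proof.
by move=> /fsubsetP tt'; apply/fsubsetP => v; rewrite !in_fsep => /andP[/tt' -> ->].
Qed.

End FsetSep.

Section Proposition.
Variables (V : choiceType) (K : {fset V} -> Prop) (X Y : V -> Prop).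
Hypothesis K_complex : simplicial_complex K.

Definition overlap v := X v /\ Y v.

Definition adapted s := K s /\
  ((forall v, v \in s -> X v) \/ (forall v, v \in s -> Y v) \/
   (exists2 v, v \in s & overlap v)).

Variable sigma : {fset V}.
Hypothesis K_sigma : K sigma.

Section NotAdapted.
Hypothesis sigma_not_adapted : ~ adapted sigma.

Lemma overlap_of_up t : up_inclusion adapted sigma t -> exists2 v, v \in t & overlap v.
Proof.
move=> [[Kt [tX|[tY|//]]] st]; case: sigma_not_adapted; split => //.
  by left => v vs; apply/tX/(fsubsetP st).
by right; left => v vs; apply/tY/(fsubsetP st).
Qed.

Lemma StarIn_up_weak_equivalence :
  poset_weak_equivalence (StarIn K sigma overlap) (up_inclusion adapted sigma)
    (fun mu => mu `|` sigma).
Proof.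
have [_ K_sub] := K_complex.
have fST mu : StarIn K sigma overlap mu -> up_inclusion adapted sigma (mu `|` sigma).
  move=> [muA [/fset0Pn [v vmu] Kmu]]; split; last exact: fsubsetUr.
  by split => //; right; right; exists v; [rewrite in_fsetU vmu | apply: muA].
have rTS t : up_inclusion adapted sigma t -> StarIn K sigma overlap (fsep t overlap).
  move=> tup; have [v vt Av] := overlap_of_up tup; have [[Kt _] st] := tup.
  have vr : v \in fsep t overlap by rewrite in_fsep vt; apply/asboolP.
  split; first by move=> w; rewrite in_fsep => /andP[_ /asboolP].
  split; first by apply/fset0Pn; exists v.
  apply: (K_sub t) => //; first by rewrite fsubUset fsep_sub st.
  by apply/fset0Pn; exists v; rewrite in_fsetU vr.
have rK mu : StarIn K sigma overlap mu -> fsep (mu `|` sigma) overlap = mu.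
  move=> [muA _]; apply/fsetP => v; rewrite in_fsep in_fsetU.
  have [vmu|vmu] /= := boolP (v \in mu); first by apply/asboolP; apply: muA.
  apply/negbTE/negP => /andP[vs /asboolP Av]; apply: sigma_not_adapted.
  by split => //; right; right; exists v.
apply: (poset_weak_equivalence_of_retract fST rTS _ _ rK (h := id)) => //.
- by move=> x y _ _; apply: fsetSU.
- by move=> x y _ _; apply: fsepS.
- by move=> t [_ st]; rewrite fsubUset fsep_sub st.
Qed.

End NotAdapted.

Section Adapted.
Hypothesis sigma_adapted : adapted sigma.

Lemma up_contractible : poset_contractible (up_inclusion adapted sigma).
Proof.
apply: (poset_contractible_of_bottom (m := sigma)) => [|x [] //].
by split; [exact: sigma_adapted | exact: fsubset_refl].
Qed.

Definition side v := if `[< forall w, w \in sigma -> X w >] then X v else Y v.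

Definition adapt t := if `[< adapted t >] then t else fsep t side.

Lemma side_sigma :
  (forall v, v \in sigma -> side v) \/ (exists2 v, v \in sigma & overlap v).
Proof.
rewrite /side; case: asboolP => sX; first by left.
by case: sigma_adapted => _ [//|[sY|h]]; [left | right].
Qed.

Lemma side_adapted t : K t -> (forall v, v \in t -> side v) -> adapted t.
Proof. by rewrite /side; case: asboolP => _ Kt h; split => //; [left | right; left]. Qed.

Lemma side_or_overlap t : sigma `<=` t ->
  (forall v, v \in t -> X v) \/ (forall v, v \in t -> Y v) ->
  (forall v, v \in t -> side v) \/ (exists2 v, v \in t & overlap v).
Proof.
have [_ K_sub] := K_complex; have /fset0Pn [w ws] := K_complex.1 _ K_sigma.
move=> /fsubsetP st; rewrite /side; case: asboolP => sX [tX|tY].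
- by left.
- by right; exists w; [apply: st | split; [apply: sX | apply/tY/st]].
- by case: sX => v vs; apply/tX/st.
- by left.
Qed.

Lemma adapt_up t : K t -> sigma `<=` t -> up_inclusion adapted sigma (adapt t).
Proof.
have [_ K_sub] := K_complex.
move=> Kt st; rewrite /adapt; case: asboolP => [At|nAt]; first by split.
have sZ v : v \in sigma -> side v.
  move=> vs; case: side_sigma => [sZ|[w ws Aw]]; first exact: sZ.
  case: nAt; split => //; right; right.
  by exists w => //; apply: (fsubsetP st).
have s_sub : sigma `<=` fsep t side.
  by apply/fsubsetP => v vs; rewrite in_fsep (fsubsetP st v vs); apply/asboolP/sZ.
split => //; apply: side_adapted => [|v]; last by rewrite in_fsep => /andP[_ /asboolP].
apply: (K_sub t) => //; first exact: fsep_sub.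
by apply: contraNneq (K_complex.1 _ K_sigma) => t0; rewrite -fsubset0 -t0.
Qed.

Lemma adapt_sub t : adapt t `<=` t.
Proof. by rewrite /adapt; case: asboolP => _; [apply: fsubset_refl | apply: fsep_sub]. Qed.

Lemma adapt_id t : adapted t -> adapt t = t.
Proof. by rewrite /adapt; case: asboolP. Qed.

Lemma adapt_mono t t' : K t' -> sigma `<=` t -> t `<=` t' -> adapt t `<=` adapt t'.
Proof.
move=> Kt' st tt'; rewrite /adapt.
case: (asboolP (adapted t)) => At; case: (asboolP (adapted t')) => At' //.
- have no_overlap : ~ exists2 v, v \in t & overlap v.
    case=> v vt Av; case: At'; split => //; right; right.
    by exists v => //; apply: (fsubsetP tt').
  have tZ : forall v, v \in t -> side v.
    have [_ tXY] := At.
    have tXY' : (forall v, v \in t -> X v) \/ (forall v, v \in t -> Y v).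
      by case: tXY => [tX|[tY|ov]]; [left | right | case: no_overlap].
    by case: (side_or_overlap st tXY') => // ov; case: no_overlap.
  by apply/fsubsetP => v vt; rewrite in_fsep (fsubsetP tt' v vt); apply/asboolP/tZ.
- exact: fsubset_trans (fsep_sub _ _) tt'.
- exact: fsepS.
Qed.

Lemma up_Star_weak_equivalence :
  poset_weak_equivalence (up_inclusion adapted sigma) (Star K sigma) id.
Proof.
have hTT x : Star K sigma x -> Star K sigma (x `|` sigma).
  move=> [Kx Ksx]; rewrite fsetUC; split => //.
  by rewrite (fsetUidPr _ _ (fsubsetUl sigma x)).
have rTS x : Star K sigma x -> up_inclusion adapted sigma (adapt (x `|` sigma)).
  by move=> [_ Ksx]; apply: adapt_up; [rewrite fsetUC | apply: fsubsetUr].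
apply: (@poset_weak_equivalence_of_retract _ _ _ id (fun x => adapt (x `|` sigma))
  _ rTS _ _ _ (fun x => x `|` sigma) hTT) => //.
- by move=> x [[Kx _] sx]; split; rewrite // (fsetUidPr _ _ sx).
- move=> x y _ [_ Ksy] xy; apply: adapt_mono; first by rewrite fsetUC.
    exact: fsubsetUr.
  exact: fsetSU.
- by move=> x [Ax sx]; rewrite /= (fsetUidPl _ _ sx) adapt_id.
- by move=> x y _ _; apply: fsetSU.
- by move=> x _; apply: adapt_sub.
- by move=> x _; apply: fsubsetUl.
- by move=> x [_ sx]; apply/fsetUidPl.
Qed.

End Adapted.
End Proposition.

Theorem proposition7p4 (V : choiceType) (K : {fset V} -> Prop) (X Y : V -> Prop) :
  simplicial_complex K ->
  (forall v, X v \/ Y v <-> vertices K v) ->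
  let A := fun v => X v /\ Y v in
  let P := fun s : {fset V} => K s /\
      ((forall v, v \in s -> X v) \/ (forall v, v \in s -> Y v) \/
       (exists2 v, v \in s & A v)) in
  forall sigma : {fset V}, K sigma ->
    (P sigma ->
       poset_contractible (up_inclusion P sigma) /\
       poset_weak_equivalence (up_inclusion P sigma) (Star K sigma) id) /\
    (~ P sigma ->
       poset_weak_equivalence (StarIn K sigma A) (up_inclusion P sigma)
         (fun mu => mu `|` sigma)).
Proof.
move=> K_complex _ A P sigma K_sigma; split=> [P_sigma|nP_sigma].
- split; first exact: (up_contractible (X := X) (Y := Y) P_sigma).
  exact: (up_Star_weak_equivalence (X := X) (Y := Y) K_complex K_sigma P_sigma).
- exact: (StarIn_up_weak_equivalence (X := X) (Y := Y) K_complex K_sigma nP_sigma).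
Qed.
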